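(* Let $R$ be a commutative ring of Krull dimension $0$ which is integral over an Artinian subring $R_0$, write $\mathcal{F}=\mathcal{F}(R_0,R)$, and let $n\ge 1$. If $R$ is not Noetherian, then the ring of Artinian power series $S=\mathcal{F}\llbracket X_1,\ldots,X_n\rrbracket$ is not Noetherian, and $S$ is strictly contained in the formal power series ring $R\llbracket X_1,\ldots,X_n\rrbracket$.
   Context: All rings are commutative with identity, and subrings share the identity. For a $0$-dimensional ring $R$ and an Artinian subring $R_0\subseteq R$ such that $R$ is integral over $R_0$, let $\mathcal{F}(R_0,R)=\{R_\alpha\}$ denote the family of all subrings of $R$ that are finitely generated as $R_0$-algebras; this family is directed, each $R_\alpha$ is Artinian, and $R=\bigcup_\alpha R_\alpha$. The ring of Artinian power series $\mathcal{F}\llbracket X_1,\ldots,X_n\rrbracket$ is the set of all $f\in R\llbracket X_1,\ldots,X_n\rrbracket$ such that all coefficients of $f$ lie in a single $R_\alpha\in\mathcal{F}$; equivalently, $\mathcal{F}\llbracket X_1,\ldots,X_n\rrbracket=\bigcup_\alpha R_\alpha\llbracket X_1,\ldots,X_n\rrbracket$, which is a subring of $R\llbracket X_1,\ldots,X_n\rrbracket$. *)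

From HB Require Import structures.
From mathcomp Require Import all_boot all_order all_algebra.
Set Implicit Arguments. Unset Strict Implicit. Unset Printing Implicit Defensive.
Import Order.TTheory GRing.Theory Num.Theory.
Local Open Scope ring_scope.

(* I is an ideal of the subring S (of an ambient type T with zero, addition,
   multiplication): I is contained in S, contains 0, is closed under addition
   and under multiplication by elements of S (closure under negation follows
   from multiplication by -1 \in S). *)
Definition is_ideal (T : Type) (zero : T) (add mul : T -> T -> T)
    (S : T -> Prop) (I : T -> Prop) : Prop :=
  [/\ (forall x, I x -> S x), I zero,
      (forall x y, I x -> I y -> I (add x y)) &
      (forall a x, S a -> I x -> I (mul a x))].

Definition noetherian_in (T : Type) (zero : T) (add mul : T -> T -> T)
    (S : T -> Prop) : Prop :=
  forall I : nat -> T -> Prop,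
    (forall k, is_ideal zero add mul S (I k)) ->
    (forall k x, I k x -> I k.+1 x) ->
    exists N, forall k, (N <= k)%N -> forall x, I k x <-> I N x.

Definition artinian_in (T : Type) (zero : T) (add mul : T -> T -> T)
    (S : T -> Prop) : Prop :=
  forall I : nat -> T -> Prop,
    (forall k, is_ideal zero add mul S (I k)) ->
    (forall k x, I k.+1 x -> I k x) ->
    exists N, forall k, (N <= k)%N -> forall x, I k x <-> I N x.

Definition ring_ideal (R : pzRingType) (S : R -> Prop) (I : R -> Prop) :=
  is_ideal 0 +%R *%R S I.
Definition ring_noetherian (R : pzRingType) (S : R -> Prop) :=
  noetherian_in 0 +%R *%R S.
Definition ring_artinian (R : pzRingType) (S : R -> Prop) :=
  artinian_in 0 +%R *%R S.

Definition prime_ideal (R : comNzRingType) (P : R -> Prop) :=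
  [/\ ring_ideal (fun _ => True) P, ~ P 1 &
      forall a b, P (a * b) -> P a \/ P b].

Definition maximal_ideal (R : comNzRingType) (M : R -> Prop) :=
  [/\ ring_ideal (fun _ => True) M, ~ M 1 &
      forall J, ring_ideal (fun _ => True) J -> (forall x, M x -> J x) ->
        (forall x, J x <-> M x) \/ J 1].

Definition krull_dim0 (R : comNzRingType) :=
  (exists P : R -> Prop, prime_ideal P) /\
  forall P : R -> Prop, prime_ideal P -> maximal_ideal P.

Definition integral_over (R : comNzRingType) (R0 : {pred R}) :=
  forall x : R, exists p : {poly R},
    [/\ p \is monic, p \is a polyOver R0 & root p x].

Definition gen_subring (R : comNzRingType) (R0 : {pred R}) (s : seq R) (x : R) :=
  forall T : {pred R}, subring_closed T -> {subset R0 <= T} ->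
    {subset s <= T} -> x \in T.

(* The members of F(R0,R) are exactly the subrings [gen_subring R0 s], s : seq R. *)

(* Monomials X^m, m : 'I_n -> nat (exponent vectors). *)
Definition mono (n : nat) := {ffun 'I_n -> nat}.

Definition pser (R : Type) (n : nat) := mono n -> R.

Definition ps_zero (R : pzRingType) (n : nat) : pser R n := fun _ => 0.
Definition ps_add (R : pzRingType) (n : nat) (f g : pser R n) : pser R n :=
  fun m => f m + g m.
(* Cauchy product: (fg)_m = sum over a <= m (pointwise) of f_a * g_(m-a).
   Each a <= m is enumerated once as an element of {ffun 'I_n -> 'I_(d+1)},
   d = max_i m_i. *)
Definition ps_mul (R : pzRingType) (n : nat) (f g : pser R n) : pser R n :=
  fun m =>
    \sum_(a : {ffun 'I_n -> 'I_((\max_(i < n) m i).+1)} |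
            [forall i, (a i <= m i)%N])
      f [ffun i => nat_of_ord (a i)] * g [ffun i => (m i - a i)%N].

(* The ring of Artinian power series F[[X_1..X_n]]: all coefficients lie in a
   single member of F(R0,R). *)
Definition artinian_pser (R : comNzRingType) (R0 : {pred R}) (n : nat)
    (f : pser R n) : Prop :=
  exists s : seq R, forall m, gen_subring R0 s (f m).

From HB Require Import structures.
From mathcomp Require Import all_boot all_order all_algebra.
From mathcomp Require Import ring.
From mathcomp Require Import boolp.
Set Implicit Arguments. Unset Strict Implicit. Unset Printing Implicit Defensive.
Import GRing.Theory.
Local Open Scope ring_scope.

(* The constant series embed [R] into [S], and a chain of ideals of [R] lifts to the
   chain of series whose constant coefficient lies in it; hence [S] is not Noetherian.
   For the strict inclusion, note that the coefficients of an Artinian series lie in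
   one subring [R0[s]] generated by finitely many elements. Since these elements are
   integral, [R0[s]] sits inside a finitely generated [R0]-module, and finitely
   generated modules over the Artinian ring [R0] are Noetherian (Hopkins-Levitzki: the
   Jacobson radical of [R0] is a finite intersection of maximal ideals and is
   nilpotent, so the module has a finite filtration whose layers are vector spaces over
   residue fields satisfying DCC, hence ACC). So the witnesses of a strictly ascending
   chain of ideals of [R] never fit in one [R0[s]], and the series listing them is not
   Artinian. *)

(** * Chains *)

Section Chains.

Variable T : Type.

Definition incl (P Q : T -> Prop) := forall x, P x -> Q x.

Definition ascending (N : nat -> T -> Prop) := forall k, incl (N k) (N k.+1).
Definition descending (N : nat -> T -> Prop) := forall k, incl (N k.+1) (N k).

Definition stationary (N : nat -> T -> Prop) :=
  exists n0, forall k, (n0 <= k)%N -> forall x, N k x <-> N n0 x.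

Lemma ascending_incl N : ascending N -> forall i j, (i <= j)%N -> incl (N i) (N j).
Proof.
move=> hN i j /subnK <-; elim: (j - i)%N => [|d IH] x //.
by rewrite addSn => /IH /hN.
Qed.

Lemma descending_incl N : descending N -> forall i j, (i <= j)%N -> incl (N j) (N i).
Proof.
move=> hN i j /subnK <-; elim: (j - i)%N => [|d IH] x //.
by rewrite addSn => /hN /IH.
Qed.

Lemma nonstationary_strict_subchain N : ascending N -> ~ stationary N ->
  exists (s : nat -> nat) (y : nat -> T),
    forall k, [/\ (s k <= s k.+1)%N, N (s k.+1) (y k) & ~ N (s k) (y k)].
Proof.
move=> hN hNs.
have jump n : exists p : nat * T, [/\ (n <= p.1)%N, N p.1 p.2 & ~ N n p.2].
  apply: contrapT => hn; apply: hNs; exists n => k hk x.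
  split=> [hx|]; last exact: ascending_incl.
  by apply: contrapT => hnx; apply: hn; exists (k, x).
pose next n := sval (cid (jump n)).
have nextP n := svalP (cid (jump n)).
pose s := fix s k := if k is k'.+1 then (next (s k')).1 else 0%N.
by exists s, (fun k => (next (s k)).2) => k; case: (nextP (s k)).
Qed.

End Chains.

Lemma big_ord_pad (V : nmodType) K K' (F : nat -> V) : (K <= K')%N ->
  (forall i, (K <= i)%N -> F i = 0) -> \sum_(i < K') F i = \sum_(i < K) F i.
Proof.
move=> hK hF; rewrite (big_ord_widen _ _ hK) [in RHS]big_mkcond /=.
by apply: eq_bigr => i _; case: ltnP => // /hF.
Qed.

(** * Submodules of [R] over the subring [R0] *)

Section Modules.

Variables (R : comNzRingType) (R0 : {pred R}).
Hypothesis R0_subring : subring_closed R0.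
HB.instance Definition _ := GRing.isSubringClosed.Build R R0 R0_subring.

Definition submod (X : R -> Prop) :=
  [/\ X 0, forall x y, X x -> X y -> X (x + y) &
      forall a x, a \in R0 -> X x -> X (a * x)].

Definition artinian_mod (M : R -> Prop) := forall N : nat -> R -> Prop,
  (forall k, submod (N k) /\ incl (N k) M) -> descending N -> stationary N.

Definition noetherian_mod (M : R -> Prop) := forall N : nat -> R -> Prop,
  (forall k, submod (N k) /\ incl (N k) M) -> ascending N -> stationary N.

Hypothesis R0_artinian : artinian_mod (fun a => a \in R0).

Definition capm (X Y : R -> Prop) z := X z /\ Y z.
Definition addm (X Y : R -> Prop) z := exists u v, [/\ X u, Y v & z = u + v].

Lemma submodN X x : submod X -> X x -> X (- x).
Proof. by case=> _ _ hM hx; rewrite -mulN1r; apply: hM; rewrite ?rpredN1. Qed.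

Lemma submodB X x y : submod X -> X x -> X y -> X (x - y).
Proof. by move=> hX hx hy; case: (hX) => _ hD _; apply: hD (submodN hX hy). Qed.

Lemma submod_sum X K (F : nat -> R) :
  submod X -> (forall i, (i < K)%N -> X (F i)) -> X (\sum_(i < K) F i).
Proof.
case=> h0 hD _; elim: K => [|K IH] hF; first by rewrite big_ord0.
by rewrite big_ord_recr /=; apply: hD; [apply: IH => i /ltnW; apply: hF|apply: hF].
Qed.

Lemma submod0 : submod (fun z => z = 0).
Proof. by split=> [|x y -> ->|a x _ ->]; rewrite ?addr0 ?mulr0. Qed.

Lemma submodR0 : submod (fun z => z \in R0).
Proof. by split=> [|x y|a x]; [exact: rpred0|exact: rpredD|exact: rpredM]. Qed.

Lemma submod_capm X Y : submod X -> submod Y -> submod (capm X Y).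
Proof.
case=> X0 XD XM [Y0 YD YM]; split=> [//|x y [? ?] [? ?]|a x ha [? ?]].
  by split; [apply: XD|apply: YD].
by split; [apply: XM|apply: YM].
Qed.

Lemma submod_addm X Y : submod X -> submod Y -> submod (addm X Y).
Proof.
case=> X0 XD XM [Y0 YD YM]; split.
- by exists 0, 0; rewrite addr0.
- move=> _ _ [u [v [hu hv ->]]] [u' [v' [hu' hv' ->]]].
  by exists (u + u'), (v + v'); split; [apply: XD|apply: YD|rewrite addrACA].
- move=> a _ ha [u [v [hu hv ->]]].
  by exists (a * u), (a * v); split; [apply: XM|apply: YM|rewrite mulrDr].
Qed.

Lemma artinian_mod_incl M M' : incl M' M -> artinian_mod M -> artinian_mod M'.
Proof. by move=> hM hA N hN; apply: hA => k; case: (hN k) => ? hk; split=> // x /hk/hM. Qed.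

Lemma submod_modular X Y B : submod X -> submod Y -> incl X Y ->
  incl (capm Y B) X -> incl Y (addm X B) -> incl Y X.
Proof.
move=> [_ XD _] hY hXY hYB hYXB z /[dup] hz /hYXB [u [v [hu hv ez]]].
have hvY : Y v by rewrite (_ : v = z - u); [exact: submodB (hXY _ hu)|rewrite ez; ring].
by rewrite ez; apply: XD hu (hYB _ _).
Qed.

Lemma stationary_modular N B : submod B -> (forall k, submod (N k)) ->
  ascending N \/ descending N ->
  stationary (fun k => capm (N k) B) -> stationary (fun k => addm (N k) B) ->
  stationary N.
Proof.
move=> hB hN hmono [n1 hn1] [n2 hn2].
have flip i j : (maxn n1 n2 <= i)%N -> (maxn n1 n2 <= j)%N ->
    incl (N i) (N j) -> incl (N j) (N i).
  rewrite !geq_max => /andP[hi1 hi2] /andP[hj1 hj2] hij.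
  apply: submod_modular hij _ _ => // [z /(hn1 _ hj1)/(hn1 _ hi1)-[] //|z hz].
  by apply/(hn2 _ hi2)/(hn2 _ hj2); exists z, 0; rewrite addr0; case: hB.
exists (maxn n1 n2) => k hk z; have hm := leqnn (maxn n1 n2).
case: hmono => [/ascending_incl|/descending_incl] /(_ _ _ hk) hmono.
  by split=> [/(flip _ _ hm hk hmono)|/hmono].
by split=> [/hmono|/(flip _ _ hk hm hmono)].
Qed.

Fixpoint span (L : seq R) : R -> Prop :=
  if L is x :: L' then fun z => exists a w, [/\ a \in R0, span L' w & z = a * x + w]
  else fun z => z = 0.

Lemma span_submod L : submod (span L).
Proof.
elim: L => [|x L [h0 hD hM]] /=; first exact: submod0.
split.
- by exists 0, 0; rewrite mul0r addr0 rpred0.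
- move=> _ _ [a [w [ha hw ->]]] [b [v [hb hv ->]]].
  by exists (a + b), (w + v); rewrite rpredD //; split=> //; [exact: hD|ring].
- move=> c _ hc [a [w [ha hw ->]]].
  by exists (c * a), (c * w); rewrite rpredM //; split=> //; [exact: hM|ring].
Qed.
Lemma span_cat L1 L2 z : span (L1 ++ L2) z <-> addm (span L1) (span L2) z.
Proof.
elim: L1 z => [|x L1 IH] z /=.
  by split=> [hz|[_ [w [-> hw ->]]]]; [exists 0, z; rewrite add0r|rewrite add0r].
split=> [[a [w [ha /IH [u [v [hu hv ->]]] ->]]]|[_ [v [[a [u [ha hu ->]]] hv ->]]]].
  by exists (a * x + u), v; split=> //; [exists a, u|rewrite addrA].
by exists a, (u + v); split=> //; [apply/IH; exists u, v|rewrite addrA].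
Qed.

Lemma span_map_mul c L z : span (map ( *%R c) L) z <-> exists2 w, span L w & z = c * w.
Proof.
elim: L z => [|x L IH] z /=.
  by split=> [->|[w -> ->]]; [exists 0; rewrite ?mulr0|rewrite mulr0].
split=> [[a [w [ha /IH [u hu ->] ->]]]|[_ [a [u [ha hu ->]]] ->]].
  by exists (a * x + u); [exists a, u|rewrite mulrDr mulrCA].
by exists a, (c * u); split=> //; [apply/IH; exists u|rewrite mulrDr mulrCA].
Qed.


Lemma artinian_span L : artinian_mod (span L).
Proof.
elim: L => [|x L IH] N hN hdec.
  have zero k z : N k z <-> z = 0.
    by split=> [/(proj2 (hN k))|->] //; case: (proj1 (hN k)).
  by exists 0%N => k _ z; split=> /zero /zero.
have hNsub k := proj1 (hN k).
apply: (stationary_modular (span_submod L) hNsub (or_intror hdec)).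
  apply: IH => [k|k z [/hdec ? ?]]; last by split.
  by split=> [|z [] //]; exact: submod_capm (hNsub k) (span_submod L).
(* The coefficients of [x] in [N k] form a descending chain of ideals of [R0]. *)
pose C k a := a \in R0 /\ exists2 w, span L w & N k (a * x + w).
have [n0 hn0] : stationary C.
  apply: R0_artinian => [k|k a [ha [w hw /hdec hN']]]; last by split=> //; exists w.
  have [N0 ND NM] := hNsub k; have [s0 sD sM] := span_submod L.
  split=> [|a [] //]; split.
  - by split; [exact: rpred0|exists 0; rewrite ?mul0r ?addr0].
  - move=> a b [ha [w hw hw']] [hb [v hv hv']]; split; first exact: rpredD.
    by exists (w + v); [exact: sD|rewrite mulrDl addrACA; exact: ND].
  - move=> c a hc [ha [w hw hw']]; split; first exact: rpredM.
    by exists (c * w); [exact: sM|rewrite -mulrA -mulrDr; exact: NM].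
have [s0 sD _] := span_submod L.
have add_coef k z : addm (N k) (span L) z <->
    exists a w, [/\ C k a, span L w & z = a * x + w].
  split=> [[u [v [hu hv ->]]]|[a [w [[ha [w' hw' hN']] hw ->]]]].
    have [a [w [ha hw eu]]] := proj2 (hN k) _ hu.
    exists a, (w + v); split; [by split=> //; exists w; rewrite -?eu|exact: sD|].
    by rewrite eu addrA.
  exists (a * x + w'), (w - w'); split=> //; last by ring.
  exact: submodB (span_submod L) hw hw'.
exists n0 => k hk z.
by split=> /add_coef [a [w [/(hn0 _ hk) ? ? ->]]]; apply/add_coef; exists a, w.
Qed.

(** * Finitely generated [R0]-modules are Noetherian *)

Definition prodm (I X : R -> Prop) z :=
  forall P, submod P -> (forall a x, I a -> X x -> P (a * x)) -> P z.

Lemma prodm_submod I X : submod (prodm I X).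
Proof.
split=> [P [h0 _ _] _ //|x y hx hy P hP hb|a x ha hx P hP hb].
- by case: (hP) => _ hD _; apply: hD; [apply: hx|apply: hy].
- by case: (hP) => _ _ hM; apply: hM => //; apply: hx.
Qed.

Lemma prodm_mul I X a x : I a -> X x -> prodm I X (a * x).
Proof. by move=> ha hx P _ hb; apply: hb. Qed.

Lemma prodm_min I X P : submod P ->
  (forall a x, I a -> X x -> P (a * x)) -> incl (prodm I X) P.
Proof. by move=> hP hb z hz; apply: hz. Qed.

Lemma prodm_incl I X : incl I (fun a => a \in R0) -> submod X -> incl (prodm I X) X.
Proof. by move=> hI hX; apply: prodm_min => // a x /hI ha hx; case: hX => _ _; apply. Qed.

Lemma prodm_mono I I' X X' : incl I I' -> incl X X' -> incl (prodm I X) (prodm I' X').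
Proof.
by move=> hI hX; apply: prodm_min (prodm_submod _ _) _ => a x /hI ha /hX; apply: prodm_mul.
Qed.

Lemma prodm_assoc I K X : incl (prodm I (prodm K X)) (prodm (prodm I K) X).
Proof.
apply: prodm_min (prodm_submod _ _) _ => a x ha hx.
have [h0 hD hM] := prodm_submod (prodm I K) X.
apply: (hx (fun x => prodm (prodm I K) X (a * x))) => [|c u hc hu].
  split=> [|u v|c u hc]; rewrite ?mulr0 ?mulrDr ?[a * (c * _)]mulrCA //.
  - exact: hD.
  - exact: hM.
by rewrite mulrA; apply: prodm_mul => //; apply: prodm_mul.
Qed.

Lemma prodmR0 X : incl X (prodm (fun a => a \in R0) X).
Proof. by move=> x hx; rewrite -[x]mul1r; apply: prodm_mul; rewrite ?rpred1. Qed.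
Lemma prodmC I K : incl (prodm I K) (prodm K I).
Proof.
by apply: prodm_min => [|a x ha hx]; [exact: prodm_submod|rewrite mulrC; apply: prodm_mul].
Qed.

Lemma prodm_incl_l I X : submod I -> incl X (fun a => a \in R0) -> incl (prodm I X) I.
Proof.
move=> hI hXR0 z /prodmC; apply: (prodm_min hI) => a x /hXR0 ha hx.
by case: hI => _ _; apply.
Qed.

(* [m] is a maximal ideal of [R0], stated as: [R0 / m] is a field. *)
Definition max_ideal (m : R -> Prop) :=
  [/\ submod m, incl m (fun a => a \in R0), ~ m 1 &
      forall a, a \in R0 -> ~ m a -> exists2 c, c \in R0 & m (c * a - 1)].

Section Layer.

Variables (m M : R -> Prop) (Q : nat -> R -> Prop) (y : nat -> R).
Hypotheses (m_max : max_ideal m) (M_submod : submod M).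
Hypotheses (Q_submod : forall k, submod (Q k)) (Q_asc : ascending Q).
Hypotheses (Q_above : forall k, incl (prodm m M) (Q k)) (Q_below : forall k, incl (Q k) M).
Hypothesis y_new : forall k, Q k.+1 (y k) /\ ~ Q k (y k).

Definition tail_span j z := exists b (a : nat -> R) K,
  [/\ prodm m M b, forall i, a i \in R0, forall i, (i < j)%N -> a i = 0,
      forall i, (K <= i)%N -> a i = 0 & z = b + \sum_(i < K) a i * y i].

Lemma tail_span_submod j : submod (tail_span j).
Proof.
have [B0 BD BM] := prodm_submod m M.
split.
- exists 0, (fun _ => 0), 0%N; split=> //; first by move=> i; apply: rpred0.
  by rewrite big_ord0 addr0.
- move=> _ _ [b [a [K [hb ha ha0 haK ->]]]] [b' [a' [K' [hb' ha' ha0' haK' ->]]]].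
  exists (b + b'), (fun i => a i + a' i), (maxn K K').
  split=> [||i hi|i hi|].
  + exact: BD.
  + by move=> i; apply: rpredD.
  + by rewrite ha0 ?ha0' ?addr0.
  + by rewrite haK ?haK' ?addr0 // (leq_trans _ hi) ?leq_maxl ?leq_maxr.
  + have pad (c : nat -> R) L : (L <= maxn K K')%N -> (forall i, (L <= i)%N -> c i = 0) ->
        \sum_(i < L) c i * y i = \sum_(i < maxn K K') c i * y i.
      move=> hL hc; symmetry; apply: (@big_ord_pad _ L _ (fun i => c i * y i)) => //.
      by move=> i /hc ->; rewrite mul0r.
    rewrite (pad a K) ?leq_maxl // (pad a' K') ?leq_maxr //.
    by rewrite addrACA -big_split; congr (_ + _); apply: eq_bigr => i _; rewrite mulrDl.
- move=> c _ hc [b [a [K [hb ha ha0 haK ->]]]].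
  exists (c * b), (fun i => c * a i), K.
  split=> [||i /ha0 ->|i /haK ->|]; rewrite ?mulr0 //.
  + exact: BM.
  + by move=> i; apply: rpredM.
  + by rewrite mulrDr mulr_sumr; congr (_ + _); apply: eq_bigr => i _; rewrite mulrA.
Qed.

Lemma tail_span_incl j : incl (tail_span j) M.
Proof.
have [_ MD MM] := M_submod.
have [_ m_R0 _ _] := m_max.
move=> _ [b [a [K [hb ha _ _ ->]]]]; apply: MD; first exact: prodm_incl hb.
apply: (@submod_sum _ K (fun i => a i * y i)) => // i _; apply: MM => //.
exact: Q_below (proj1 (y_new i)).
Qed.

Lemma tail_span_descending : descending tail_span.
Proof.
move=> j _ [b [a [K [hb ha ha0 haK ->]]]].
by exists b, a, K; split=> // i /ltnW /ha0.
Qed.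

Lemma tail_span_y j : tail_span j (y j).
Proof.
exists 0, (fun i => (i == j)%:R), j.+1.
split=> [|i|i /ltn_eqF ->|i|] //; first by case: (prodm_submod m M).
- by case: (i == j); rewrite ?rpred0 ?rpred1.
- by case: eqP => // ->; rewrite ltnn.
rewrite add0r big_ord_recr /= eqxx mul1r big1 ?add0r // => i _.
by rewrite (ltn_eqF (ltn_ord i)) mul0r.
Qed.

(* Peel off the top term: a coefficient outside [m] is invertible modulo [m] and would
   put [y K] into [Q K]. *)
Lemma tail_span_chain j z : tail_span j z -> Q j z -> prodm m M z.
Proof.
have [B0 BD BM] := prodm_submod m M.
have [_ _ _ m_inv] := m_max.
move=> [b [a [K [hb ha ha0 _ ->]]]]; elim: K b hb => [|K IH] b hb.
  by rewrite big_ord0 addr0.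
rewrite big_ord_recr /= (addrC _ (_ * y K)) addrA; set S := \sum_(i < K) _.
have [hKj|hjK] := ltnP K j; first by rewrite ha0 // mul0r addr0; apply: IH.
have [amK|amK] := pselect (m (a K)).
  by apply: IH; apply: BD hb (prodm_mul amK (Q_below (proj1 (y_new K)))).
move=> hz; exfalso; have [QK0 QKD QKM] := Q_submod K; apply: (proj2 (y_new K)).
have hQjK : incl (Q j) (Q K) by exact: ascending_incl.
have ayQ : Q K (a K * y K).
  rewrite (_ : a K * y K = b + a K * y K + S - (b + S)); last by ring.
  apply: submodB; [exact: Q_submod|exact: hQjK|apply: QKD; first exact: Q_above].
  apply: (@submod_sum _ K (fun i => a i * y i)) => // i hi; apply: QKM => //.
  exact: ascending_incl hi _ (proj1 (y_new i)).
have [c hc hcm] := m_inv _ (ha K) amK.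
rewrite (_ : y K = c * (a K * y K) - (c * a K - 1) * y K); last by ring.
by apply: submodB (QKM _ _ hc ayQ) (Q_above _ (prodm_mul hcm (Q_below (proj1 (y_new K))))).
Qed.

Lemma strict_chain_not_artinian : ~ artinian_mod M.
Proof.
move=> hM; have [j hj] := hM tail_span (fun j => conj (tail_span_submod j) (@tail_span_incl j))
  tail_span_descending.
have /(hj _ (leqnSn j)) hy := @tail_span_y j.
apply: (proj2 (y_new j)); apply: Q_above.
exact: tail_span_chain hy (proj1 (y_new j)).
Qed.

End Layer.

Lemma noetherian_layer m M N : max_ideal m -> submod M -> artinian_mod M ->
  (forall k, [/\ submod (N k), incl (prodm m M) (N k) & incl (N k) M]) ->
  ascending N -> stationary N.
Proof.
move=> hm hM hMa hN hasc; apply: contrapT => hNs.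
have [s [y hsy]] := nonstationary_strict_subchain hasc hNs.
apply: (@strict_chain_not_artinian m M (fun k => N (s k)) y) => // k; try by case: (hN (s k)).
  by apply: ascending_incl; case: (hsy k).
by case: (hsy k).
Qed.

Fixpoint all_max (ms : seq (R -> Prop)) : Prop :=
  if ms is m :: ms' then max_ideal m /\ all_max ms' else True.

Definition prodm_seq (ms : seq (R -> Prop)) (X : R -> Prop) :=
  foldl (fun Y m => prodm m Y) X ms.

Lemma all_max_cat ms ms' : all_max ms -> all_max ms' -> all_max (ms ++ ms').
Proof. by elim: ms => [|m ms IH] //= [hm hms] hms'; split; last exact: IH. Qed.

Lemma all_max_flatten_nseq k ms : all_max ms -> all_max (flatten (nseq k ms)).
Proof. by move=> hms; elim: k => [|k IH] //=; apply: all_max_cat. Qed.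

Lemma prodm_seq_submod ms X : submod X -> submod (prodm_seq ms X).
Proof. by elim: ms X => [|m ms IH] X hX //=; exact: IH (prodm_submod m X). Qed.

Lemma noetherian_filtration ms X : all_max ms -> submod X -> artinian_mod X ->
  incl (prodm_seq ms X) (fun z => z = 0) -> noetherian_mod X.
Proof.
elim: ms X => [|m ms IH] X /= hms hX hXa hX0 N hN hasc.
  have zero k z : N k z <-> z = 0.
    by split=> [/(proj2 (hN k))/hX0|->] //; case: (proj1 (hN k)).
  by exists 0%N => k _ z; split=> /zero /zero.
have [[m_submod m_R0 _ _] ms_max] := hms.
have [hNsub hNX] := (fun k => proj1 (hN k), fun k => proj2 (hN k)).
have [_ XD _] := hX.
have mX_X : incl (prodm m X) X by exact: prodm_incl.
apply: (stationary_modular (prodm_submod m X) hNsub (or_introl hasc)).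
  apply: (IH _ ms_max (prodm_submod m X) (artinian_mod_incl mX_X hXa) hX0) => [k|k z []].
    by split=> [|z []//]; apply: submod_capm (prodm_submod m X).
  by move=> /hasc; split.
apply: (noetherian_layer (proj1 hms) hX hXa) => [k|k _ [u [v [hu hv ->]]]].
  split; first exact: submod_addm (prodm_submod m X).
    by move=> z hz; exists 0, z; rewrite add0r; split=> //; case: (hNsub k).
  by move=> _ [u [v [hu hv ->]]]; apply: XD (hNX k _ hu) (mX_X _ hv).
by exists u, v; split=> //; apply: hasc.
Qed.

Definition principal v z := exists2 c, c \in R0 & z = c * v.

Lemma principal_submod v : submod (principal v).
Proof.
split; first by exists 0; rewrite ?mul0r ?rpred0.
  by move=> _ _ [c hc ->] [d hd ->]; exists (c + d); rewrite ?rpredD ?mulrDl.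
by move=> a _ ha [c hc ->]; exists (a * c); rewrite ?rpredM ?mulrA.
Qed.

Lemma principal_incl v : v \in R0 -> incl (principal v) (fun a => a \in R0).
Proof. by move=> hv _ [c hc ->]; apply: rpredM. Qed.

Lemma artinian_minimal M (F : (R -> Prop) -> Prop) : artinian_mod M ->
  (forall K, F K -> submod K /\ incl K M) ->
  forall K0, F K0 -> exists2 K, F K & forall K', F K' -> incl K' K -> incl K K'.
Proof.
move=> hM hF K0 hK0; apply: contrapT => hmin.
have smaller (K : {K | F K}) : exists K' : {K | F K},
    incl (sval K') (sval K) /\ ~ incl (sval K) (sval K').
  case: K => K hK /=; apply: contrapT => hK'; apply: hmin; exists K => // K' hK'F hK'K.
  by apply: contrapT => hKK'; apply: hK'; exists (exist _ K' hK'F).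
pose next K := sval (cid (smaller K)).
have nextP K := svalP (cid (smaller K)).
pose C k := sval (iter k next (exist _ K0 hK0)).
have [n hn] := hM C (fun k => hF _ (svalP _)) (fun k => proj1 (nextP _)).
by apply: (proj2 (nextP (iter n next (exist _ K0 hK0)))) => z /(hn n.+1 (leqnSn n)).
Qed.

(* A maximal ideal over [I]: the colon ideal [(I : x)] for [x] in an ideal [K] minimal
   among those strictly above [I]. *)
Lemma max_ideal_above I : submod I -> incl I (fun a => a \in R0) -> ~ I 1 ->
  exists2 m, max_ideal m & incl I m.
Proof.
move=> hI hIR0 hI1; have [I0 ID IM] := hI.
pose F K := [/\ submod K, incl K (fun a => a \in R0), incl I K & exists2 x, K x & ~ I x].
have [K [hK hKR0 hIK [x hx hxI]] Kmin] : exists2 K, F K &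
    forall K', F K' -> incl K' K -> incl K K'.
  apply: (@artinian_minimal _ F R0_artinian _ (fun a => a \in R0)) => [K [] //|].
  by split=> //; [exact: submodR0|exists 1; rewrite ?rpred1].
exists (fun a => a \in R0 /\ I (a * x)); last first.
  by move=> i hi; split; [exact: hIR0|rewrite mulrC; apply: IM (hKR0 _ hx) hi].
split=> [||[_]|a ha hna]; last 2 first.
- by rewrite mul1r.
- pose K' := addm I (principal (a * x)).
  have K'K : incl K' K.
    have [_ KD KM] := hK.
    by move=> _ [i [_ [hi [c hc ->]] ->]]; apply: KD (hIK _ hi) (KM _ _ hc (KM _ _ ha hx)).
  have FK' : F K'.
    split; first exact: submod_addm (principal_submod _).
    - by move=> _ [i [_ [hi [c hc ->]] ->]]; rewrite rpredD ?(hIR0 _ hi) ?rpredM ?(hKR0 _ hx).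
    - by move=> i hi; exists i, 0; rewrite addr0; split=> //; exists 0; rewrite ?mul0r ?rpred0.
    - exists (a * x); last by move=> h; apply: hna; split.
      by exists 0, (a * x); rewrite add0r; split=> //; exists 1; rewrite ?mul1r ?rpred1.
  have [i [_ [hi [c hc ->]] ex]] := Kmin _ FK' K'K x hx.
  exists c => //; split; first by rewrite rpredB ?rpredM ?rpred1.
  have ei : i = x - c * (a * x) by rewrite {1}ex addrK.
  have -> : (c * a - 1) * x = - i by rewrite ei; ring.
  exact: submodN.
- split; first by rewrite rpred0 mul0r.
    by move=> u v [? ?] [? ?]; rewrite rpredD // mulrDl; split=> //; apply: ID.
  by move=> c u hc [? ?]; rewrite rpredM // -mulrA; split=> //; apply: IM.
- by move=> a [].
Qed.

Fixpoint meet_seq (ms : seq (R -> Prop)) : R -> Prop :=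
  if ms is m :: ms' then capm m (meet_seq ms') else fun a => a \in R0.

Lemma meet_seq_submod ms : all_max ms -> submod (meet_seq ms).
Proof.
elim: ms => [|m ms IH] /=; first by move=> _; exact: submodR0.
by case=> [[hm _ _ _] /IH]; apply: submod_capm.
Qed.

Lemma meet_seq_incl ms : incl (meet_seq ms) (fun a => a \in R0).
Proof. by elim: ms => [|m ms IH] // z [_ /IH]. Qed.

(* Take a minimal finite intersection of maximal ideals. *)
Lemma jacobson_meet_seq : exists2 ms, all_max ms &
  forall m, max_ideal m -> incl (meet_seq ms) m.
Proof.
pose F K := exists2 ms, all_max ms & K = meet_seq ms.
have [_ [ms hms ->] Kmin] : exists2 K, F K & forall K', F K' -> incl K' K -> incl K K'.
  apply: (@artinian_minimal _ F R0_artinian _ (meet_seq [::])); last by exists [::].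
  by move=> _ [ms hms ->]; split; [exact: meet_seq_submod|exact: meet_seq_incl].
exists ms => // m hm z /(Kmin (meet_seq (m :: ms))) [] //; first by exists (m :: ms).
by move=> ? [].
Qed.

Lemma jacobson_unit J j : incl J (fun a => a \in R0) ->
  (forall m, max_ideal m -> incl J m) -> J j ->
  exists2 c, c \in R0 & c * (1 - j) = 1.
Proof.
move=> hJR0 hJ hj; apply: contrapT => hn.
have jR0 : j \in R0 by apply: hJR0.
have [|||m hm hjm] := @max_ideal_above (principal (1 - j)).
- exact: principal_submod.
- by apply: principal_incl; rewrite rpredB ?rpred1.
- by move=> [c hc e]; apply: hn; exists c.
have [[_ mD _] _ m1 _] := hm; apply: m1.
rewrite -(subrK j 1); apply: mD; last exact: hJ hm _ hj.
by apply: hjm; exists 1; rewrite ?mul1r ?rpred1.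
Qed.

(* Nakayama-style: the powers of [J] stabilise at some [I = J I]; if [I] were nonzero,
   an ideal [K] minimal with [I K <> 0], containing [x] with [I x <> 0], would equal [J x],
   so that [x = j x] and [x = 0] since [1 - j] is a unit. *)
Lemma jacobson_nilpotent J : submod J -> incl J (fun a => a \in R0) ->
  (forall m, max_ideal m -> incl J m) ->
  exists k, incl (iter k (prodm J) (fun a => a \in R0)) (fun z => z = 0).
Proof.
move=> hJ hJR0 hJm; have [J0 JD JM] := hJ.
pose D k := iter k (prodm J) (fun a => a \in R0).
have hD k : submod (D k) /\ incl (D k) (fun a => a \in R0).
  elim: k => [|k [hDk hDkR0]] /=; first by split=> //; exact: submodR0.
  by split=> [|z /(prodm_incl hJR0 hDk)/hDkR0]; first exact: prodm_submod.
have [k hk] := R0_artinian hD (fun k => prodm_incl hJR0 (proj1 (hD k))).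
pose I := D k; have hIJ : incl I (prodm J I) by move=> z /(hk k.+1 (leqnSn k)).
exists k => z hz; apply: contrapT => hz0.
pose F K := [/\ submod K, incl K (fun a => a \in R0) &
  exists y x, [/\ I y, K x & y * x <> 0]].
have [K [hK hKR0 [y [x [hy hx hyx]]]] Kmin] : exists2 K, F K &
    forall K', F K' -> incl K' K -> incl K K'.
  apply: (@artinian_minimal _ F R0_artinian _ (fun a => a \in R0)) => [K [] //|].
  by split=> //; [exact: submodR0|exists z, 1; rewrite mulr1 rpred1].
pose L w := exists2 j, J j & w = j * x.
have hLK : incl L K by case: hK => _ _ KM _ [j hj ->]; apply: KM (hJR0 _ hj) hx.
have [|j hj ex] := Kmin L _ hLK x hx.
split.
- split; first by exists 0; rewrite ?mul0r.
    by move=> _ _ [j hj ->] [j' hj' ->]; exists (j + j'); rewrite ?mulrDl //; apply: JD.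
  by move=> a _ ha [j hj ->]; exists (a * j); rewrite ?mulrA //; apply: JM.
- by move=> w /hLK /hKR0.
- apply: contrapT => hn; apply: hyx.
  apply: (@prodm_min _ _ (fun w => w * x = 0) _ _ _ (hIJ _ hy)).
    by split=> [|u v hu hv|a u ha hu]; rewrite ?mul0r // ?mulrDl ?hu ?hv ?addr0 // -mulrA hu mulr0.
  move=> j u hj hu; apply: contrapT => hne; apply: hn.
  exists u, (j * x); split=> //; first by exists j.
  by rewrite mulrA (mulrC u).
have [c hc hc1] := jacobson_unit hJR0 hJm hj.
apply: hyx; suff -> : x = 0 by rewrite mulr0.
by rewrite -[x]mul1r -hc1 -mulrA mulrBl mul1r -ex subrr mulr0.
Qed.

Lemma prodm_seq_meet ms X : all_max ms -> submod X ->
  incl (prodm_seq ms X) (prodm (meet_seq ms) X).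
Proof.
elim: ms X => [|m ms IH] X /=; first by move=> _ _; exact: prodmR0.
move=> [[m_submod m_R0 _ _] hms] hX z /(IH _ hms (prodm_submod m X)) /prodm_assoc.
apply: prodm_mono => // a /prodmC ha; split.
  exact: prodm_incl_l m_submod (@meet_seq_incl ms) _ ha.
exact: prodm_incl m_R0 (meet_seq_submod hms) _ ha.
Qed.

Lemma prodm_seq_pow ms k X : all_max ms -> submod X ->
  incl (prodm_seq (flatten (nseq k ms)) X)
       (prodm (iter k (prodm (meet_seq ms)) (fun a => a \in R0)) X).
Proof.
move=> hms; elim: k X => [|k IH] X hX /=; first exact: prodmR0.
rewrite /prodm_seq foldl_cat -/(prodm_seq _ _) -/(prodm_seq _ _) => z.
move=> /(IH _ (prodm_seq_submod ms hX)) /(prodm_mono (fun a ha => ha) (prodm_seq_meet hms hX)).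
by move=> /prodm_assoc; apply: prodm_mono => // a /prodmC.
Qed.

Theorem noetherian_span L : noetherian_mod (span L).
Proof.
have [ms hms hJ] := jacobson_meet_seq.
have [k hk] := jacobson_nilpotent (meet_seq_submod hms) (@meet_seq_incl ms) hJ.
apply: (@noetherian_filtration (flatten (nseq k ms))).
- exact: all_max_flatten_nseq.
- exact: span_submod.
- exact: artinian_span.
- move=> z /(prodm_seq_pow hms (span_submod L)).
  by apply: (prodm_min submod0) => a x /hk -> _; rewrite mul0r.
Qed.



(** * Integral elements *)

Fixpoint powers_times (x : R) (L : seq R) (d : nat) : seq R :=
  if d is d'.+1 then powers_times x L d' ++ map ( *%R (x ^+ d')) L else [::].

Lemma span_powers_times x L d z : span (powers_times x L d) z <->
  exists w : nat -> R, (forall i, span L (w i)) /\ z = \sum_(i < d) x ^+ i * w i.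
Proof.
have [s0 _ _] := span_submod L.
elim: d z => [|d IH] z /=.
  by split=> [->|[w [_ ->]]]; [exists (fun _ => 0); rewrite big_ord0|rewrite big_ord0].
rewrite span_cat; split=> [[_ [_ [/IH [w [hw ->]] /span_map_mul [v hv ->] ->]]]|[w [hw ->]]].
  exists (fun i => if i == d then v else w i); split=> [i|]; first by case: eqP.
  rewrite big_ord_recr /= eqxx; congr (_ + _); apply: eq_bigr => i _.
  by rewrite (ltn_eqF (ltn_ord i)).
rewrite big_ord_recr /=; exists (\sum_(i < d) x ^+ i * w i), (x ^+ d * w d).
by split=> //; [apply/IH; exists w|apply/span_map_mul; exists (w d)].
Qed.

Lemma monic_root_power (p : {poly R}) x : p \is monic -> p \is a polyOver R0 ->
  root p x -> exists d (c : nat -> R),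
    (forall i, c i \in R0) /\ x ^+ d.+1 = \sum_(i < d.+1) c i * x ^+ i.
Proof.
move=> p_monic p_R0 /rootP px0.
have c_R0 i : - p`_i \in R0 by rewrite rpredN; apply: (polyOverP p_R0).
have lead1 := monicP p_monic; rewrite lead_coefE in lead1.
case sp: (size p) lead1 => [|[|d]] /= lead1.
- by move: lead1; rewrite nth_default ?sp // => /esym/eqP; rewrite oner_eq0.
- move: px0; rewrite (size1_polyC (eq_leq sp)) lead1 hornerC => /eqP.
  by rewrite oner_eq0.
exists d, (fun i => - p`_i); split=> //.
move: px0; rewrite horner_coef sp big_ord_recr /= lead1 mul1r => /eqP.
rewrite addrC addr_eq0 => /eqP ->; rewrite -sumrN.
by apply: eq_bigr => i _; rewrite mulNr.
Qed.

Lemma span_powers_times_mul y x L d : (forall z, span L z -> span L (y * z)) ->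
  forall z, span (powers_times x L d) z -> span (powers_times x L d) (y * z).
Proof.
move=> hyL z /span_powers_times [w [hw ->]]; apply/span_powers_times.
exists (fun i => y * w i); split=> [i|]; first exact: hyL.
by rewrite mulr_sumr; apply: eq_bigr => i _; rewrite mulrCA.
Qed.

(* Multiplying by [x] shifts the coefficients up; the top one is folded back down
   with the relation [x ^+ d.+1 = \sum_(i < d.+1) c i * x ^+ i]. *)
Lemma span_powers_times_mulX x L d (c : nat -> R) : (forall i, c i \in R0) ->
  x ^+ d.+1 = \sum_(i < d.+1) c i * x ^+ i ->
  forall z, span (powers_times x L d.+1) z -> span (powers_times x L d.+1) (x * z).
Proof.
move=> c_R0 xd z /span_powers_times [w [hw ->]]; apply/span_powers_times.
have [s0 sD sM] := span_submod L.
pose sh i := if i is j.+1 then w j else 0.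
exists (fun i => sh i + c i * w d); split=> [i|].
  by apply: sD; [case: i|apply: sM].
rewrite [RHS](eq_bigr (fun i : 'I_d.+1 => x ^+ i * sh i + c i * x ^+ i * w d)); last first.
  by move=> i _; rewrite mulrDr mulrCA mulrA.
rewrite big_split /= -mulr_suml -xd mulr_sumr big_ord_recr big_ord_recl /= mulr0 add0r.
congr (_ + _); last by rewrite mulrA -exprS.
by apply: eq_bigr => i _; rewrite mulrA -exprS /bump leq0n add1n.
Qed.

Lemma integral_span_closure (s : seq R) : integral_over R0 -> exists Ls,
  span Ls 1 /\ forall y, y \in s -> forall z, span Ls z -> span Ls (y * z).
Proof.
move=> R0_integral; elim: s => [|x s [Ls [Ls1 LsM]]].
  by exists [:: 1]; split=> //; exists 1, 0; rewrite rpred1 mulr1 addr0.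
have [p [p_monic p_R0 px0]] := R0_integral x.
have [d [c [c_R0 xd]]] := monic_root_power p_monic p_R0 px0.
exists (powers_times x Ls d.+1); split.
  apply/span_powers_times; exists (fun i => (i == 0%N)%:R); split.
    by case=> [|i] /=; [rewrite mulr1n|rewrite mulr0n; case: (span_submod Ls)].
  by rewrite big_ord_recl /= big1 ?mulr1 ?addr0 // => i _; rewrite mulr0n mulr0.
move=> y; rewrite inE => /predU1P [->|ys]; first exact: span_powers_times_mulX xd.
exact/span_powers_times_mul/LsM.
Qed.

Lemma gen_subring1 s : gen_subring R0 s 1.
Proof. by move=> T [T1 _ _]. Qed.

Lemma gen_subringB s x y : gen_subring R0 s x -> gen_subring R0 s y ->
  gen_subring R0 s (x - y).
Proof. by move=> hx hy T hT h0 hs; case: (hT) => _ TB _; apply: TB; [exact: hx|exact: hy]. Qed.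

Lemma gen_subringM s x y : gen_subring R0 s x -> gen_subring R0 s y ->
  gen_subring R0 s (x * y).
Proof. by move=> hx hy T hT h0 hs; case: (hT) => _ _ TM; apply: TM; [exact: hx|exact: hy]. Qed.

Lemma gen_subring0 s : gen_subring R0 s 0.
Proof. by rewrite -(subrr 1); apply: gen_subringB; apply: gen_subring1. Qed.

Lemma gen_subringD s x y : gen_subring R0 s x -> gen_subring R0 s y ->
  gen_subring R0 s (x + y).
Proof.
move=> hx hy; rewrite -[y]opprK -[- y]sub0r.
exact: gen_subringB hx (gen_subringB (@gen_subring0 s) hy).
Qed.

Lemma gen_subring_R0 s x : x \in R0 -> gen_subring R0 s x.
Proof. by move=> hx T _ hT _; apply: hT. Qed.

Lemma gen_subring_mem s x : x \in s -> gen_subring R0 s x.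
Proof. by move=> hx T _ _ hT; apply: hT. Qed.

Lemma gen_subring_catl s1 s2 x : gen_subring R0 s1 x -> gen_subring R0 (s1 ++ s2) x.
Proof. by move=> hx T hT h0 hs; apply: hx => // y hy; apply: hs; rewrite mem_cat hy. Qed.

Lemma gen_subring_catr s1 s2 x : gen_subring R0 s2 x -> gen_subring R0 (s1 ++ s2) x.
Proof. by move=> hx T hT h0 hs; apply: hx => // y hy; apply: hs; rewrite mem_cat hy orbT. Qed.

(* The multipliers of [span Ls] form a subring containing [R0] and [s]. *)
Lemma gen_subring_span (s Ls : seq R) : span Ls 1 ->
  (forall y, y \in s -> forall z, span Ls z -> span Ls (y * z)) ->
  incl (gen_subring R0 s) (span Ls).
Proof.
move=> Ls1 LsM z hz; have [_ _ sM] := span_submod Ls.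
pose T : {pred R} := [pred t | `[< forall w, span Ls w -> span Ls (t * w) >]].
have memT t : t \in T <-> forall w, span Ls w -> span Ls (t * w).
  by rewrite inE; split=> /asboolP.
suff /memT /(_ 1 Ls1) : z \in T by rewrite mulr1.
apply: hz => [|a ha|y hy]; last 2 first.
- by apply/memT => w; apply: sM.
- by apply/memT; apply: LsM.
split=> [|u v /memT hu /memT hv|u v /memT hu /memT hv]; apply/memT => w hw.
- by rewrite mul1r.
- by rewrite mulrBl; apply: submodB (span_submod Ls) (hu _ hw) (hv _ hw).
- by rewrite -mulrA; apply/hu/hv.
Qed.

Lemma noetherian_gen_subring s : integral_over R0 ->
  noetherian_in 0 +%R *%R (gen_subring R0 s).
Proof.
move=> R0_integral I hI hasc; have [Ls [Ls1 LsM]] := integral_span_closure s R0_integral.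
apply: (@noetherian_span Ls I) => // k; have [hIs I0 ID IM] := hI k.
split; last by move=> x /hIs; apply: gen_subring_span.
by split=> // a x ha; apply/IM/gen_subring_R0.
Qed.

End Modules.

(** * Artinian power series *)

Section PowerSeries.

Variables (R : comNzRingType) (R0 : {pred R}) (n : nat).

Definition mono0 : mono n := [ffun => 0%N].

Lemma ps_mul_mono0 (f g : pser R n) : ps_mul f g mono0 = f mono0 * g mono0.
Proof.
rewrite /ps_mul (big_pred1 [ffun => ord0]) => [|a /=].
  by congr (f _ * g _); apply/ffunP => i; rewrite !ffunE.
apply/forallP/eqP => [ha|-> i]; last by rewrite !ffunE.
apply/ffunP => i; apply/val_inj; have := ha i.
by rewrite !ffunE leqn0 => /eqP.
Qed.

Lemma artinian_pser_const c : artinian_pser R0 (fun _ : mono n => c).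
Proof. by exists [:: c] => m; apply: gen_subring_mem; rewrite inE. Qed.

Lemma artinian_pserD (f g : pser R n) : artinian_pser R0 f -> artinian_pser R0 g ->
  artinian_pser R0 (ps_add f g).
Proof.
move=> [s1 hs1] [s2 hs2]; exists (s1 ++ s2) => m.
by apply: gen_subringD; [apply: gen_subring_catl|apply: gen_subring_catr].
Qed.

Lemma artinian_pserM (f g : pser R n) : artinian_pser R0 f -> artinian_pser R0 g ->
  artinian_pser R0 (ps_mul f g).
Proof.
move=> [s1 hs1] [s2 hs2]; exists (s1 ++ s2) => m.
apply: (big_ind (gen_subring R0 (s1 ++ s2))) => [|x y|a _].
- exact: gen_subring0.
- exact: gen_subringD.
- by apply: gen_subringM; [apply: gen_subring_catl|apply: gen_subring_catr].
Qed.

Lemma artinian_pser_not_noetherian : ~ ring_noetherian (fun _ : R => True) ->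
  ~ noetherian_in (@ps_zero R n) (@ps_add R n) (@ps_mul R n) (artinian_pser R0 (n:=n)).
Proof.
move=> R_not_noeth S_noeth; apply: R_not_noeth => I hI hasc.
pose K k (f : pser R n) := artinian_pser R0 f /\ I k (f mono0).
have [N hN] : stationary K.
  apply: S_noeth => [k|k f [? /hasc]]; last by split.
  have [_ I0 ID IM] := hI k; split=> [f []//|||].
  - by split=> //; apply: (artinian_pser_const 0).
  - by move=> f g [hf hf0] [hg hg0]; split; [exact: artinian_pserD|exact: ID].
  - by move=> a f ha [hf hf0]; split; [exact: artinian_pserM|rewrite ps_mul_mono0; exact: IM].
exists N => k hk x.
by split=> hx; [case: (proj1 (hN k hk _) (conj (artinian_pser_const x) hx))
               |case: (proj2 (hN k hk _) (conj (artinian_pser_const x) hx))].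
Qed.

End PowerSeries.

Lemma exists_not_artinian_pser (R : comNzRingType) (R0 : {pred R}) (n : nat) :
  subring_closed R0 -> artinian_mod R0 (fun a => a \in R0) -> integral_over R0 ->
  (1 <= n)%N -> ~ ring_noetherian (fun _ : R => True) ->
  exists f : pser R n, ~ artinian_pser R0 f.
Proof.
move=> R0_subring R0_artinian R0_integral n_gt0 R_not_noeth.
apply: contrapT => all_artinian; apply: R_not_noeth => I hI hasc.
apply: contrapT => /(nonstationary_strict_subchain hasc) [sg [y hsy]].
pose f (m : mono n) := y (m (Ordinal n_gt0)).
have [s hs] : artinian_pser R0 f by apply: contrapT => hf; apply: all_artinian; exists f.
have ys k : gen_subring R0 s (y k) by have := hs [ffun => k]; rewrite /f ffunE.
pose J k := capm (gen_subring R0 s) (I (sg k)).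
have [N hN] : stationary J.
  apply: (@noetherian_gen_subring _ _ R0_subring R0_artinian s R0_integral J) => [k|k x [hx]].
    have [_ I0 ID IM] := hI (sg k); split=> [x []//|||].
    - by split=> //; exact: gen_subring0.
    - by move=> x x' [? ?] [? ?]; split; [exact: gen_subringD|exact: ID].
    - by move=> a x ha [? ?]; split; [exact: gen_subringM|exact: IM].
  by have [hle _ _] := hsy k; move/(ascending_incl hasc hle); split.
have [_ hyN hyN'] := hsy N.
by case: (proj1 (hN N.+1 (leqnSn N) (y N)) (conj (ys N) hyN)) => _ /hyN'.
Qed.

Theorem mainTheorem1 (R : comNzRingType) (R0 : {pred R}) (n : nat) :
  subring_closed R0 ->
  krull_dim0 R ->
  ring_artinian (fun x => x \in R0) ->
  integral_over R0 ->
  (1 <= n)%N ->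
  ~ ring_noetherian (fun _ : R => True) ->
  ~ noetherian_in (@ps_zero R n) (@ps_add R n) (@ps_mul R n)
      (artinian_pser R0 (n:=n)) /\
  exists f : pser R n, ~ artinian_pser R0 f.
Proof.
(* Krull dimension 0 is implied by the other hypotheses. *)
move=> R0_subring _ R0_artinian R0_integral n_gt0 R_not_noeth.
have R0_artinian_mod : artinian_mod R0 (fun a => a \in R0).
  by move=> N hN; apply: R0_artinian => k; have [[? ? ?] ?] := hN k.
split; first exact: artinian_pser_not_noetherian.
exact: exists_not_artinian_pser.
Qed.
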